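(* In the high-dimensional setting below, assume $\epsilon_{I,j}\ne0$ for all $j$. If for some constant $c>1$ the penalty levels satisfy $$\lambda\gamma\ge\frac{c+1}{c-1}\max_{j\in[p]}\frac{\|(X^{(n)}_{I,j^c})^\top\epsilon_{I,j}\|_\infty}{\|\epsilon_{I,j}\|_2}\quad\text{and}\quad\lambda\ge\frac{c+1}{c-1}\max_{i\in[n]}\Big(\sum_{j\in[p]}\frac{\epsilon_{ij}^2}{\|\epsilon_{I,j}\|_2^2}\Big)^{1/2},$$ then $\widehat\Delta\in\mathscr C_{\mathcal J,O}(c,\gamma)$.
   Context: High-dimensional setting. Let $n,p\ge1$, $[n]=\{1,\dots,n\}$. $X=Y+E^*\in\mathbb R^{n\times p}$ where (C1) the rows of $Y$ are independent $\mathcal N_p(\mu^*,\Sigma^* )$, $\Sigma^*$ positive definite; (C2) $E^*$ is deterministic, $[n]=I\cup O$ a partition with the rows of $E^*$ indexed by $I$ equal to zero, and every row of $E^*(\Sigma^* )^{-1/2}$ of Euclidean norm at most $M_E\sqrt p$; $\mu^*=0$. $\Omega^*=(\Sigma^* )^{-1}$ with diagonal entries $\omega^*_{jj}$, $B^*=\Omega^*\mathrm{diag}(\Omega^* )^{-1}$, $X^{(n)}=X/\sqrt n$, $\Theta^*=E^*B^*/\sqrt n$, $\xi=X^{(n)}B^*-\Theta^*$, and $\epsilon\in\mathbb R^{n\times p}$ with $\epsilon_{ij}=\sqrt n(\omega^*_{jj})^{1/2}\xi_{ij}$. Notation: $A_{i,\bullet}$, $A_{\bullet,j}$ rows/columns,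 $A_{K,J}$ submatrices, $j^c=[p]\setminus\{j\}$, $\|A\|_{q_1,q_2}=(\sum_i\|A_{i,\bullet}\|_{q_1}^{q_2})^{1/q_2}$, $\|A^\top\|_{2,1}=\sum_j\|A_{\bullet,j}\|_2$. Estimator: for $\lambda,\gamma\ge0$, $(\widehat B,\widehat\Theta)$ minimizes $F(B,\Theta)=\|(X^{(n)}B-\Theta)^\top\|_{2,1}+\lambda(\|\Theta\|_{2,1}+\gamma\|B\|_{1,1})$ over $B\in\mathbb R^{p\times p}$ with all $B_{jj}=1$ and $\Theta\in\mathbb R^{n\times p}$. Let $\mathcal J=\{J_j:j\in[p]\}$, $J_j\subset[p]$, be such that $B^*_{i,j}=0$ whenever $i\notin J_j$; for a $p\times p$ matrix $A$, $A_{\mathcal J}$ is obtained by zeroing entries $A_{i,j}$ with $i\notin J_j$, and $A_{\mathcal J^c}=A-A_{\mathcal J}$. $\xi_O$ is the $n\times p$ matrix equal to $\xi$ on the rows indexed by $O$ and zero elsewhere; $\bar\Theta^*=\Theta^*+\xi_O$. $\widehat\Delta^B=\widehat B-B^*$, $\widehat\Delta^\Theta=\widehat\Theta-\bar\Theta^*$, and $\widehat\Delta\in\mathbb R^{(p+n)\times p}$ is the matrix obtained by stacking $\widehat\Delta^B$ above $\widehat\Delta^\Theta$. For $\Delta\in\mathbb R^{(p+n)\times p}$ write $\Delta^B=\Delta_{1:p,\bullet}$, $\Delta^\Theta=\Delta_{(p+1):(p+n),\bullet}$; cone: $\mathscr C_{\mathcal J,O}(c,\gamma)=\{\Delta:\gamma\|\Delta^B_{\mathcal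 J^c}\|_{1,1}+\|\Delta^\Theta_{O^c,\bullet}\|_{2,1}\le c(\gamma\|\Delta^B_{\mathcal J}\|_{1,1}+\|\Delta^\Theta_{O,\bullet}\|_{2,1})\}$, with $O^c=I$. *)

From HB Require Import structures.
From mathcomp Require Import all_boot all_order all_algebra.
Set Implicit Arguments. Unset Strict Implicit. Unset Printing Implicit Defensive.
Import Order.TTheory GRing.Theory Num.Theory.
Local Open Scope ring_scope.

Section Norms.
Variable R : rcfType.

Definition rownorm2 {m k} (A : 'M[R]_(m, k)) (i : 'I_m) : R :=
  Num.sqrt (\sum_(j < k) A i j ^+ 2).

Definition colnorm2 {m k} (A : 'M[R]_(m, k)) (j : 'I_k) : R :=
  Num.sqrt (\sum_(i < m) A i j ^+ 2).

Definition norm21 {m k} (A : 'M[R]_(m, k)) : R := \sum_(i < m) rownorm2 A i.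

Definition normT21 {m k} (A : 'M[R]_(m, k)) : R := \sum_(j < k) colnorm2 A j.

Definition norm11 {m k} (A : 'M[R]_(m, k)) : R := \sum_(i < m) \sum_(j < k) `|A i j|.

Definition norm21_on {m k} (K : {set 'I_m}) (A : 'M[R]_(m, k)) : R :=
  \sum_(i in K) rownorm2 A i.

Definition restrJ {p} (J : 'I_p -> {set 'I_p}) (A : 'M[R]_(p, p)) : 'M[R]_(p, p) :=
  \matrix_(i, j) (if i \in J j then A i j else 0).
Definition restrJc {p} (J : 'I_p -> {set 'I_p}) (A : 'M[R]_(p, p)) : 'M[R]_(p, p) :=
  A - restrJ J A.

Definition rowsOn {m k} (K : {set 'I_m}) (A : 'M[R]_(m, k)) : 'M[R]_(m, k) :=
  \matrix_(i, j) (if i \in K then A i j else 0).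

Definition posdef {p} (S : 'M[R]_p) : Prop :=
  S^T = S /\ forall v : 'rV[R]_p, v != 0 -> 0 < (v *m S *m v^T) 0 0.

Definition Fobj {n p} (Xn : 'M[R]_(n, p)) (lam gam : R)
  (B : 'M[R]_(p, p)) (Th : 'M[R]_(n, p)) : R :=
  normT21 (Xn *m B - Th) + lam * (norm21 Th + gam * norm11 B).

(* The cone C_{J,O}(c, gamma), with O^c = I; Delta is (p+n) x p *)
Definition cone {n p} (J : 'I_p -> {set 'I_p}) (O : {set 'I_n}) (c gam : R)
  (D : 'M[R]_(p + n, p)) : Prop :=
  let DB := usubmx D in let DT := dsubmx D in
  gam * norm11 (restrJc J DB) + norm21_on (~: O) DT
    <= c * (gam * norm11 (restrJ J DB) + norm21_on O DT).

End Norms.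

From HB Require Import structures.
From mathcomp Require Import all_boot all_order all_algebra.
From mathcomp Require Import ring lra.
Import Order.TTheory GRing.Theory Num.Theory.
Local Open Scope ring_scope.

(* Compare the minimiser (Bh, Thh) with (B*, Theta*bar), whose residual
   X^(n) B* - Theta*bar is xi on the rows of I and zero elsewhere.  Convexity of
   the column norms at that residual, with subgradient U = eps_I normalised column
   by column, turns F(Bh, Thh) <= F(B*, Theta*bar) into
     <U, X^(n) DB> - <U, DTheta> + lam (|Thh| - |Theta*bar| + gam (|Bh| - |B*|)) <= 0.
   As DB has zero diagonal, |<U, X^(n) DB>| is at most the largest off-diagonal
   correlation |(X^(n)_{I,k})^T eps_{I,j}| / |eps_{I,j}| times |DB|_1, and
   <U, DTheta> is at most the largest row norm of U times |DTheta_I|_{2,1}; the two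
   penalties decompose over the supports J and O.  The penalty conditions make each
   noise term at most (c-1)/(c+1) times the matching penalty, which rearranges into
   the cone inequality. *)

Section EuclideanNorm.
Context {R : rcfType} {T : finType}.
Implicit Types f g : T -> R.

Definition l2norm f : R := Num.sqrt (\sum_i f i ^+ 2).

Lemma sumsq_ge0 f : 0 <= \sum_i f i ^+ 2.
Proof. by apply: sumr_ge0 => i _; rewrite sqr_ge0. Qed.

Lemma l2norm_ge0 f : 0 <= l2norm f.
Proof. exact: sqrtr_ge0. Qed.

Lemma l2norm_sqr f : l2norm f ^+ 2 = \sum_i f i ^+ 2.
Proof. by rewrite sqr_sqrtr ?sumsq_ge0. Qed.

Lemma eq_l2norm f g : f =1 g -> l2norm f = l2norm g.
Proof. by move=> fg; rewrite /l2norm; under eq_bigr do rewrite fg. Qed.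

Lemma l2norm_scale (k : R) f : 0 <= k -> l2norm (fun i => k * f i) = k * l2norm f.
Proof.
move=> k_ge0; rewrite /l2norm.
under eq_bigr do rewrite exprMn.
by rewrite -mulr_sumr sqrtrM ?sqr_ge0 // sqrtr_sqr ger0_norm.
Qed.

Lemma l2norm_gt0 f i : f i != 0 -> 0 < l2norm f.
Proof.
move=> fi_neq0; rewrite sqrtr_gt0 (bigD1 i) //=.
apply: lt_le_trans (_ : 0 < f i ^+ 2) _; first by rewrite exprn_even_gt0.
by rewrite lerDl; apply: sumr_ge0 => j _; rewrite sqr_ge0.
Qed.

(* Lagrange's identity gives Cauchy-Schwarz without a case split on [l2norm f = 0]. *)
Lemma sum_mul_le_l2norm f g : \sum_i f i * g i <= l2norm f * l2norm g.
Proof.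
set A := \sum_i f i ^+ 2; set B := \sum_i g i ^+ 2; set C := \sum_i f i * g i.
have lagrange : \sum_i \sum_j (f i * g j - f j * g i) ^+ 2 = 2 * (A * B - C ^+ 2).
  have -> : 2 * (A * B - C ^+ 2) = A * B + B * A - 2 * (C * C) by ring.
  rewrite !big_distrlr /= mulr_sumr -big_split -sumrB /=.
  apply: eq_bigr => i _; rewrite mulr_sumr -big_split -sumrB /=.
  by apply: eq_bigr => j _; ring.
have C2_le : C ^+ 2 <= A * B.
  have : 0 <= 2 * (A * B - C ^+ 2).
    by rewrite -lagrange; apply: sumr_ge0 => i _; exact: sumsq_ge0.
  by rewrite pmulr_rge0 // subr_ge0.
apply: le_trans (ler_norm C) _.
by rewrite -sqrtr_sqr -sqrtrM ?sumsq_ge0 // ler_sqrt // mulr_ge0 ?sumsq_ge0.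
Qed.

Lemma l2normD f g : l2norm (fun i => f i + g i) <= l2norm f + l2norm g.
Proof.
rewrite -ler_sqr ?nnegrE ?addr_ge0 ?l2norm_ge0 //.
rewrite sqrrD !l2norm_sqr -mulr_natl.
under eq_bigr do rewrite sqrrD -mulr_natl.
rewrite !big_split /= -mulr_sumr.
by rewrite lerD2r lerD2l ler_wpM2l ?sum_mul_le_l2norm.
Qed.

Lemma l2norm_subgrad f g :
  l2norm f + (\sum_i f i * g i) / l2norm f <= l2norm (fun i => f i + g i).
Proof.
have [->|nf_neq0] := eqVneq (l2norm f) 0.
  by rewrite invr0 mulr0 addr0 l2norm_ge0.
have nf_gt0 : 0 < l2norm f by rewrite lt_def nf_neq0 l2norm_ge0.
have -> : l2norm f + (\sum_i f i * g i) / l2norm f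
          = (\sum_i f i * (f i + g i)) / l2norm f.
  under [in RHS]eq_bigr do rewrite mulrDr.
  rewrite big_split /= -l2norm_sqr; field; exact: nf_neq0.
by rewrite ler_pdivrMr // mulrC sum_mul_le_l2norm.
Qed.

Lemma l2norm_lerB f g : l2norm f - l2norm g <= l2norm (fun i => f i + g i).
Proof.
have := l2normD (fun i => f i + g i) (fun i => - g i).
rewrite (@eq_l2norm (fun i => f i + g i + - g i) f); last by move=> i; rewrite addrK.
have -> : l2norm (fun i => - g i) = l2norm g.
  by rewrite /l2norm; under eq_bigr do rewrite sqrrN.
by rewrite lerBlDr.
Qed.

End EuclideanNorm.

Lemma mulmx_invmx_diagE {F : fieldType} {m k} (A : 'M[F]_(m, k)) (d : 'rV[F]_k) i j :
  (forall j, d 0 j != 0) -> (A *m invmx (diag_mx d)) i j = A i j / d 0 j.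
Proof.
move=> d_neq0.
have inv_d : diag_mx d *m diag_mx (\row_j (d 0 j)^-1) = 1%:M.
  apply/matrixP => i' j'; rewrite mul_diag_mx !mxE.
  by case: eqVneq => [->|_]; rewrite ?mulr1n ?divff ?mulr0n ?mulr0.
have [d_unit _] := mulmx1_unit inv_d.
have -> : invmx (diag_mx d) = diag_mx (\row_j (d 0 j)^-1).
  by rewrite -[RHS](mulKmx d_unit) inv_d mulmx1.
by rewrite mul_mx_diag !mxE.
Qed.

Section MatrixNorms.
Context {R : rcfType}.

(* The subgradient of [normT21] at [A]; since x / 0 = 0, a zero column is mapped
   to 0, and [normT21_subgrad] needs no nondegeneracy hypothesis. *)
Definition colnormalize {m k} (A : 'M[R]_(m, k)) : 'M[R]_(m, k) :=
  \matrix_(i, j) (A i j / colnorm2 A j).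

Lemma normT21_subgrad {m k} (A V : 'M[R]_(m, k)) :
  normT21 A + \sum_j \sum_i colnormalize A i j * V i j <= normT21 (A + V).
Proof.
rewrite /normT21 -big_split; apply: ler_sum => j _ /=.
have -> : colnorm2 (A + V) j = l2norm (fun i => A i j + V i j).
  by apply: eq_l2norm => i; rewrite mxE.
have -> : \sum_i colnormalize A i j * V i j = (\sum_i A i j * V i j) / colnorm2 A j.
  by rewrite mulr_suml; apply: eq_bigr => i _; rewrite mxE mulrAC.
exact: (l2norm_subgrad (fun i => A i j)).
Qed.

Lemma colnormalize_scale {m k} (A B : 'M[R]_(m, k)) (s : 'I_k -> R) :
  (forall j, 0 < s j) -> (forall i j, B i j = s j * A i j) ->
  colnormalize B = colnormalize A.
Proof.
move=> s_gt0 BE; apply/matrixP => i j; rewrite !mxE.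
have -> : colnorm2 B j = s j * colnorm2 A j.
  by rewrite -(l2norm_scale _ (fun i => A i j)) ?ltW //; apply: eq_l2norm => i'; rewrite BE.
by rewrite BE invfM mulrACA divff ?mul1r // gt_eqF.
Qed.

Lemma colnorm2_rowsOn {m k} (K : {set 'I_m}) (A : 'M[R]_(m, k)) j :
  colnorm2 (rowsOn K A) j = Num.sqrt (\sum_(i in K) A i j ^+ 2).
Proof.
rewrite [in RHS]big_mkcond; congr Num.sqrt.
by apply: eq_bigr => i _; rewrite mxE; case: ifP; rewrite ?expr0n.
Qed.

Lemma colnormalize_rowsOn_scale {m k} (K : {set 'I_m}) (A B : 'M[R]_(m, k)) (s : 'I_k -> R) :
  (forall j, 0 < s j) -> (forall i j, B i j = s j * A i j) ->
  forall i j, colnormalize (rowsOn K A) i j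
              = (if i \in K then B i j else 0) / Num.sqrt (\sum_(i in K) B i j ^+ 2).
Proof.
move=> s_gt0 BE i j.
rewrite -(@colnormalize_scale _ _ _ (rowsOn K B) s) // => [|i' j']; last first.
  by rewrite !mxE; case: ifP; rewrite ?BE ?mulr0.
by rewrite -colnorm2_rowsOn !mxE.
Qed.

Lemma inner_mulmx_le_norm11 {n p} (X U : 'M[R]_(n, p)) (D : 'M[R]_p) G :
  (forall j, D j j = 0) ->
  (forall k j, k != j -> `|\sum_i X i k * U i j| <= G) ->
  `|\sum_j \sum_i U i j * (X *m D) i j| <= G * norm11 D.
Proof.
move=> D_diag0 XU_le.
have inner j : \sum_i U i j * (X *m D) i j = \sum_k D k j * \sum_i X i k * U i j.
  under eq_bigr do rewrite mxE mulr_sumr.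
  rewrite exchange_big /=; apply: eq_bigr => k _.
  by rewrite mulr_sumr; apply: eq_bigr => i _; ring.
rewrite (eq_bigr _ (fun j _ => inner j)) exchange_big /= /norm11 mulr_sumr.
apply: le_trans (ler_norm_sum _ _ _) _; apply: ler_sum => k _.
apply: le_trans (ler_norm_sum _ _ _) _; rewrite mulr_sumr; apply: ler_sum => j _.
rewrite normrM mulrC; have [->|kj] := eqVneq k j; first by rewrite D_diag0 normr0 !mulr0.
by rewrite ler_wpM2r ?XU_le.
Qed.

Lemma inner_le_norm21_on {m k} (U D : 'M[R]_(m, k)) (K : {set 'I_m}) H :
  (forall i, i \notin K -> forall j, U i j = 0) ->
  (forall i, i \in K -> rownorm2 U i <= H) ->
  \sum_j \sum_i U i j * D i j <= H * norm21_on K D.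
Proof.
move=> U_out U_le; rewrite exchange_big /norm21_on mulr_sumr [in X in _ <= X]big_mkcond /=.
apply: ler_sum => i _; case: ifPn => iK.
  apply: le_trans (sum_mul_le_l2norm (fun j => U i j) (fun j => D i j)) _.
  by rewrite ler_wpM2r ?l2norm_ge0 ?U_le.
by rewrite big1 // => j _; rewrite U_out ?mul0r.
Qed.

Lemma norm21_on_le_norm21D {m k} (Th D : 'M[R]_(m, k)) (K : {set 'I_m}) :
  (forall i, i \in K -> forall j, Th i j = 0) ->
  norm21_on K D - norm21_on (~: K) D <= norm21 (Th + D) - norm21 Th.
Proof.
move=> Th_K; rewrite /norm21_on /norm21 big_mkcond [X in _ - X]big_mkcond -!sumrB.
apply: ler_sum => i _.
have ThD_row : rownorm2 (Th + D) i = l2norm (fun j => Th i j + D i j).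
  by apply: eq_l2norm => j; rewrite mxE.
rewrite in_setC ThD_row; case: ifPn => iK /=.
  have -> : rownorm2 Th i = 0.
    by rewrite /rownorm2 big1 ?sqrtr0 // => j _; rewrite Th_K ?expr0n.
  by rewrite (@eq_l2norm _ _ _ (fun j => D i j)) ?subr0 // => j; rewrite Th_K ?add0r.
have := l2norm_lerB (fun j => Th i j) (fun j => D i j).
rewrite /rownorm2 -/(l2norm _) -/(l2norm _); lra.
Qed.

Lemma norm11_restrJ_split {p} (J : 'I_p -> {set 'I_p}) (D : 'M[R]_p) :
  norm11 D = norm11 (restrJ J D) + norm11 (restrJc J D).
Proof.
rewrite /norm11 -big_split; apply: eq_bigr => i _; rewrite -big_split; apply: eq_bigr => j _ /=.
by rewrite !mxE; case: ifP; rewrite ?subrr ?subr0 normr0 ?addr0 ?add0r.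
Qed.

Lemma norm11_restrJ_le_norm11D {p} (J : 'I_p -> {set 'I_p}) (B D : 'M[R]_p) :
  (forall i j, i \notin J j -> B i j = 0) ->
  norm11 (restrJc J D) - norm11 (restrJ J D) <= norm11 (B + D) - norm11 B.
Proof.
move=> B_supp; rewrite /norm11 -!sumrB; apply: ler_sum => i _.
rewrite -!sumrB; apply: ler_sum => j _; rewrite !mxE; case: ifPn => iJ.
  have := ler_normD (B i j + D i j) (- D i j); rewrite addrK normrN.
  rewrite subrr normr0; lra.
by rewrite B_supp // subr0 normr0 !subr0 add0r.
Qed.

Lemma norm11_ge0 {m k} (A : 'M[R]_(m, k)) : 0 <= norm11 A.
Proof. by apply: sumr_ge0 => i _; apply: sumr_ge0 => j _; exact: normr_ge0. Qed.

Lemma norm21_on_ge0 {m k} (K : {set 'I_m}) (A : 'M[R]_(m, k)) : 0 <= norm21_on K A.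
Proof. by apply: sumr_ge0 => i _; exact: l2norm_ge0. Qed.

End MatrixNorms.

Section Cone.
Context {R : rcfType}.

Lemma cone_ineq_of_gap {c lam gam G H aJ aJc tI tO : R} :
  1 < c -> 0 < lam -> 0 <= aJ + aJc -> 0 <= tI -> 0 <= tO ->
  (c + 1) / (c - 1) * G <= lam * gam -> (c + 1) / (c - 1) * H <= lam ->
  lam * (gam * aJc + tI - (gam * aJ + tO)) <= G * (aJ + aJc) + H * tI ->
  gam * aJc + tI <= c * (gam * aJ + tO).
Proof.
move=> c_gt1 lam_gt0 aJ_ge0 tI_ge0 tO_ge0 KG_le KH_le gap.
set K := (c + 1) / (c - 1); set x := gam * aJc + tI; set y := gam * aJ + tO.
have K_ge0 : 0 <= K by rewrite divr_ge0 //; lra.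
have Kgap : K * (lam * (x - y)) <= lam * (x + y).
  apply: le_trans (ler_wpM2l K_ge0 gap) _; rewrite mulrDr !mulrA.
  apply: le_trans (lerD (ler_wpM2r aJ_ge0 KG_le) (ler_wpM2r tI_ge0 KH_le)) _.
  rewrite -subr_ge0 (_ : _ - _ = lam * tO); first by rewrite mulr_ge0 // ltW.
  by rewrite /x /y; ring.
move: Kgap; rewrite mulrCA ler_pM2l // /K mulrAC ler_pdivrMr ?subr_gt0 //.
by move=> ?; nra.
Qed.

Lemma Fobj_basic_ineq {n p} (Xn : 'M[R]_(n, p)) lam gam (Bh B0 : 'M[R]_p)
    (Thh Th0 : 'M[R]_(n, p)) :
  let U := colnormalize (Xn *m B0 - Th0) in
  Fobj Xn lam gam Bh Thh <= Fobj Xn lam gam B0 Th0 ->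
  \sum_j \sum_i U i j * (Xn *m (Bh - B0)) i j - \sum_j \sum_i U i j * (Thh - Th0) i j
    + lam * ((norm21 Thh - norm21 Th0) + gam * (norm11 Bh - norm11 B0)) <= 0.
Proof.
move=> U; set V := Xn *m (Bh - B0) - (Thh - Th0).
have resid : Xn *m Bh - Thh = (Xn *m B0 - Th0) + V.
  by apply/matrixP => i j; rewrite /V mulmxBr !mxE; ring.
have inner_V : \sum_j \sum_i U i j * V i j
    = \sum_j \sum_i U i j * (Xn *m (Bh - B0)) i j - \sum_j \sum_i U i j * (Thh - Th0) i j.
  rewrite -sumrB; apply: eq_bigr => j _; rewrite -sumrB; apply: eq_bigr => i _.
  by rewrite -mulrBr; congr (_ * _); rewrite !mxE.
rewrite /Fobj resid -inner_V => F_le.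
have := normT21_subgrad (Xn *m B0 - Th0) V.
lra.
Qed.

Lemma cone_of_minimizer {n p} {Xn : 'M[R]_(n, p)} {J : 'I_p -> {set 'I_p}}
    {I : {set 'I_n}} {lam gam c G H : R} {Bh B0 : 'M[R]_p} {Thh Th0 : 'M[R]_(n, p)} :
  let U := colnormalize (Xn *m B0 - Th0) in
  1 < c -> 0 < lam -> 0 <= gam ->
  (forall j, Bh j j = 1) -> (forall j, B0 j j = 1) ->
  (forall i j, i \notin J j -> B0 i j = 0) ->
  (forall i, i \in I -> forall j, Th0 i j = 0) ->
  (forall i, i \notin I -> forall j, U i j = 0) ->
  (forall k j, k != j -> `|\sum_i Xn i k * U i j| <= G) ->
  (forall i, i \in I -> rownorm2 U i <= H) ->
  (c + 1) / (c - 1) * G <= lam * gam -> (c + 1) / (c - 1) * H <= lam ->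
  Fobj Xn lam gam Bh Thh <= Fobj Xn lam gam B0 Th0 ->
  cone J (~: I) c gam (col_mx (Bh - B0) (Thh - Th0)).
Proof.
move=> U c_gt1 lam_gt0 gam_ge0 Bh_diag B0_diag B0_supp Th0_I U_out XU_le U_le KG_le KH_le.
move=> /Fobj_basic_ineq; rewrite -/U /cone col_mxKu col_mxKd setCK.
set DB := Bh - B0; set DT := Thh - Th0.
set aJ := norm11 (restrJ J DB); set aJc := norm11 (restrJc J DB).
set tI := norm21_on I DT; set tO := norm21_on (~: I) DT.
move=> basic.
have T1_le : `|\sum_j \sum_i U i j * (Xn *m DB) i j| <= G * (aJ + aJc).
  rewrite -norm11_restrJ_split; apply: inner_mulmx_le_norm11 => // j.
  by rewrite !mxE Bh_diag B0_diag subrr.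
have T2_le : \sum_j \sum_i U i j * DT i j <= H * tI by exact: inner_le_norm21_on.
have dTh : tI - tO <= norm21 Thh - norm21 Th0.
  by have := norm21_on_le_norm21D Th0 DT I Th0_I; rewrite subrKC.
have dB : aJc - aJ <= norm11 Bh - norm11 B0.
  by have := norm11_restrJ_le_norm11D J B0 DB B0_supp; rewrite subrKC.
apply: (cone_ineq_of_gap c_gt1 lam_gt0 _ _ _ KG_le KH_le).
- by rewrite -norm11_restrJ_split norm11_ge0.
- exact: norm21_on_ge0.
- exact: norm21_on_ge0.
have -> : gam * aJc + tI - (gam * aJ + tO) = tI - tO + gam * (aJc - aJ) by ring.
have : lam * (tI - tO + gam * (aJc - aJ))
       <= lam * (norm21 Thh - norm21 Th0 + gam * (norm11 Bh - norm11 B0)).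
  by rewrite ler_pM2l // lerD // ler_wpM2l.
have := ler_norm (- \sum_j \sum_i U i j * (Xn *m DB) i j); rewrite normrN.
lra.
Qed.

(* [W] is the residual [A] with column [j] scaled by [s j]; the scaling does not
   change [colnormalize], so the penalty levels may be expressed through [W]. *)
Lemma cone_of_penalty_levels {n p} {Xn : 'M[R]_(n, p)} {J : 'I_p -> {set 'I_p}}
    {I : {set 'I_n}} {lam gam c : R} {Bh B0 : 'M[R]_p} {Thh Th0 A W : 'M[R]_(n, p)}
    {s : 'I_p -> R} :
  let Wnorm := fun j => Num.sqrt (\sum_(i in I) W i j ^+ 2) in
  (0 < p)%N -> 1 < c -> 0 <= gam ->
  (forall j, Bh j j = 1) -> (forall j, B0 j j = 1) ->
  (forall i j, i \notin J j -> B0 i j = 0) ->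
  (forall i, i \in I -> forall j, Th0 i j = 0) ->
  Xn *m B0 - Th0 = rowsOn I A ->
  (forall j, 0 < s j) -> (forall i j, W i j = s j * A i j) ->
  (forall j, exists2 i, i \in I & W i j != 0) ->
  Fobj Xn lam gam Bh Thh <= Fobj Xn lam gam B0 Th0 ->
  (c + 1) / (c - 1) * \big[Num.max/0]_(j < p)
     ((\big[Num.max/0]_(k < p | k != j) `|\sum_(i in I) Xn i k * W i j|) / Wnorm j)
    <= lam * gam ->
  (c + 1) / (c - 1) * \big[Num.max/0]_(i < n) Num.sqrt (\sum_(j < p) W i j ^+ 2 / Wnorm j ^+ 2)
    <= lam ->
  cone J (~: I) c gam (col_mx (Bh - B0) (Thh - Th0)).
Proof.
move=> Wnorm p_gt0 c_gt1 gam_ge0 Bh_diag B0_diag B0_supp Th0_I resid s_gt0 WE W_I_neq0 F_le.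
set Gmax := \big[Num.max/0]_(j < p) _; set Hmax := \big[Num.max/0]_(i < n) _.
move=> KG_le KH_le.
have UE i j : colnormalize (rowsOn I A) i j = (if i \in I then W i j else 0) / Wnorm j.
  exact: colnormalize_rowsOn_scale.
have Wnorm_gt0 j : 0 < Wnorm j.
  have [i iI W_neq0] := W_I_neq0 j.
  by rewrite /Wnorm -colnorm2_rowsOn (l2norm_gt0 _ i) // mxE iI.
have lam_gt0 : 0 < lam.
  have [i iI W_neq0] := W_I_neq0 (Ordinal p_gt0).
  apply: lt_le_trans KH_le; rewrite mulr_gt0 ?divr_gt0 //; try lra.
  apply: lt_le_trans (le_bigmax _ _ i); rewrite -/(l2norm _).
  under eq_bigr do rewrite -expr_div_n.
  apply: (l2norm_gt0 _ (Ordinal p_gt0)).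
  by rewrite mulf_neq0 // invr_eq0 (gt_eqF (Wnorm_gt0 _)).
apply: (cone_of_minimizer (Xn := Xn) (lam := lam) (G := Gmax) (H := Hmax));
  rewrite ?resid //.
- by move=> i iI j; rewrite UE (negbTE iI) mul0r.
- move=> k j kj.
  have -> : \sum_i Xn i k * colnormalize (rowsOn I A) i j
            = (\sum_(i in I) Xn i k * W i j) / Wnorm j.
    rewrite [in RHS]big_mkcond mulr_suml; apply: eq_bigr => i _.
    by rewrite UE; case: ifP => _; rewrite ?mulrA // !(mul0r, mulr0).
  rewrite normrM normfV (ger0_norm (sqrtr_ge0 _)).
  apply: le_trans (le_bigmax _ _ j); rewrite ler_pM2r ?invr_gt0 ?Wnorm_gt0 //.
  exact: le_bigmax_cond.
- move=> i iI; apply: le_trans (le_bigmax _ _ i).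
  by rewrite /rownorm2; under eq_bigr do rewrite UE iI expr_div_n.
Qed.

End Cone.

Theorem mainTheorem16 (R : rcfType) (n p : nat)
  (Sigma : 'M[R]_p) (E X : 'M[R]_(n, p)) (I : {set 'I_n}) (ME : R)
  (J : 'I_p -> {set 'I_p}) (lam gam c : R)
  (Bh : 'M[R]_(p, p)) (Thh : 'M[R]_(n, p)) :
  (0 < n)%N -> (0 < p)%N ->
  posdef Sigma ->
  (forall i, i \in I -> forall j, E i j = 0) ->
  (forall i : 'I_n, Num.sqrt ((row i E *m invmx Sigma *m (row i E)^T) 0 0)
                      <= ME * Num.sqrt p%:R) ->
  let O := ~: I in
  let Omega := invmx Sigma in
  let sn := Num.sqrt n%:R in
  let Bstar := Omega *m invmx (diag_mx (\row_j Omega j j)) in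
  let Xn := sn^-1 *: X in
  let Thstar := sn^-1 *: (E *m Bstar) in
  let xi := Xn *m Bstar - Thstar in
  let eps := \matrix_(i, j) (sn * Num.sqrt (Omega j j) * xi i j) in
  let epsInorm := fun j : 'I_p => Num.sqrt (\sum_(i in I) eps i j ^+ 2) in
  let Thbar := Thstar + rowsOn O xi in
  (forall i j, i \notin J j -> Bstar i j = 0) ->
  (forall j, exists2 i, i \in I & eps i j != 0) ->
  0 <= lam -> 0 <= gam ->
  (forall j, Bh j j = 1) ->
  (forall (B : 'M[R]_(p, p)) (Th : 'M[R]_(n, p)), (forall j, B j j = 1) ->
      Fobj Xn lam gam Bh Thh <= Fobj Xn lam gam B Th) ->
  1 < c ->
  lam * gam >= (c + 1) / (c - 1) *
     \big[Num.max/0]_(j < p)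
        ((\big[Num.max/0]_(k < p | k != j) `|\sum_(i in I) Xn i k * eps i j|)
          / epsInorm j) ->
  lam >= (c + 1) / (c - 1) *
     \big[Num.max/0]_(i < n)
        Num.sqrt (\sum_(j < p) eps i j ^+ 2 / epsInorm j ^+ 2) ->
  cone J O c gam (col_mx (Bh - Bstar) (Thh - Thbar)).
Proof.
move=> n_gt0 p_gt0 _ E_I _ O Omega sn Bstar Xn Thstar xi eps epsInorm Thbar
  Bstar_supp eps_I_neq0 _ gam_ge0 Bh_diag Bh_min c_gt1.
have sqrt_Omega_gt0 j : 0 < Num.sqrt (Omega j j).
  have [i _ eps_neq0] := eps_I_neq0 j.
  rewrite lt_def sqrtr_ge0 andbT; apply: contraNneq eps_neq0 => sqrt0.
  by rewrite mxE sqrt0 mulr0 mul0r.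
have scale_gt0 j : 0 < sn * Num.sqrt (Omega j j).
  by rewrite mulr_gt0 // /sn sqrtr_gt0 ltr0n.
have Bstar_diag j : Bstar j j = 1.
  have Omega_neq0 j' : Omega j' j' != 0.
    by have := sqrt_Omega_gt0 j'; rewrite sqrtr_gt0 => /lt0r_neq0.
  by rewrite mulmx_invmx_diagE => [|j']; rewrite mxE ?divff.
have Thbar_I i : i \in I -> forall j, Thbar i j = 0.
  move=> iI j; rewrite !mxE in_setC iI addr0 big1 ?mulr0 // => k _.
  by rewrite E_I ?mul0r.
have resid : Xn *m Bstar - Thbar = rowsOn I xi.
  by apply/matrixP => i j; rewrite !mxE in_setC; case: (i \in I) => /=; ring.
apply: (cone_of_penalty_levels p_gt0 c_gt1 gam_ge0 Bh_diag Bstar_diag Bstar_supp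
          Thbar_I resid scale_gt0) => //.
- by move=> i j; rewrite mxE.
- exact: Bh_min.
Qed.
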